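(* Consider SEMO on \textsc{LOTZ} with the Highest Diversity Contribution (HDC) parent selection, using as diversity measure either the crowding distance contribution or the hypervolume contribution with reference point $(-r,-r)$ for some $r\ge 1$. Then the expected time for finding the whole Pareto front is $O(n^2)$.
   Context: Search space $\{0,1\}^n$; objectives maximised. $\textsc{LOTZ}(x)=(\mathrm{LO}(x),\mathrm{TZ}(x))$, $\mathrm{LO}$ = number of leading ones, $\mathrm{TZ}$ = number of trailing zeros. Dominance: $y$ dominates $x$ if $f_i(y)\ge f_i(x)$ for all $i$, strictly for some $i$; weakly dominates if $\ge$ in all. Pareto set $X^*=\{1^i0^{n-i}:0\le i\le n\}$, front $F^*=f(X^* )$. SEMO with diversity-based parent selection: start with uniform random $s$, $P=\{s\}$. Each iteration: compute the diversity score of each $x\in P$ w.r.t. $P$; choose a parent by the selection mechanism; create $s'$ by flipping one uniformly random bit; if $s'$ is not dominated by any member of $P$, add it and remove all members weakly dominated by $s'$. Time = number of iterations until $f(P)=F^*$. HDC: always select an individual with the highest diversity score, ties broken uniformly at random. HVC with reference point $(r_1,r_2)$: sort population by increasing $f_1$ as $x_1,\dots,x_\mu$, set $f_1(x_0)=r_1$, $f_2(x_{\mu+1})=r_2$, $\mathrm{HVC}(x_i,P)=(f_1(x_i)-f_1(x_{i-1}))(f_2(x_i)-f_2(x_{i+1}))$. CDC: each point starts at 0; for each objective $m$, sort ascending by $f_m$, boundary points get $\infty$, intermediate $P[i]$ gets $+(f_m(P[i+1])-f_m(P[i-1]))/(f_m^{\max}-f_m^{\min})$, with $f_m^{\max},f_m^{\min}$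 the max and min values of objective $m$. *)

From HB Require Import structures.
From mathcomp Require Import all_boot all_order all_algebra.
Set Implicit Arguments. Unset Strict Implicit. Unset Printing Implicit Defensive.
Import Order.TTheory GRing.Theory Num.Theory.

Definition LO n (x : n.-tuple bool) : nat := find negb x.
Definition TZ n (x : n.-tuple bool) : nat := find id (rev x).
Definition fobj n (x : n.-tuple bool) : nat * nat := (LO x, TZ x).

Definition weakly_dominates n (y x : n.-tuple bool) : bool :=
  (LO x <= LO y)%N && (TZ x <= TZ y)%N.
Definition dominates n (y x : n.-tuple bool) : bool :=
  weakly_dominates y x && (fobj y != fobj x).

Definition Fstar (n : nat) : seq (nat * nat) := [seq (i, n - i)%N | i <- iota 0 n.+1].

Definition front_found n (P : {set n.-tuple bool}) : bool :=
  all (fun y => [exists x in P, fobj x == y]) (Fstar n) &&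
  [forall x in P, fobj x \in Fstar n].

Definition flip n (x : n.-tuple bool) (i : 'I_n) : n.-tuple bool :=
  [tuple if j == i then ~~ tnth x j else tnth x j | j < n].

Definition semo_update n (P : {set n.-tuple bool}) (s' : n.-tuple bool) : {set n.-tuple bool} :=
  if [exists z in P, dominates z s'] then P
  else s' |: [set z in P | ~~ weakly_dominates s' z].

Definition sort_by n (g : n.-tuple bool -> nat) (P : {set n.-tuple bool}) : seq (n.-tuple bool) :=
  sort (fun a b => (g a <= g b)%N) (enum P).

Section Scores.
Variable R : realFieldType.
Local Open Scope ring_scope.

(* diversity scores in R extended by +oo (None = +oo) *)
Definition le_score (a b : option R) : bool :=
  match a, b with
  | _, None => true
  | None, Some _ => false
  | Some x, Some y => x <= y
  end.
Definition add_score (a b : option R) : option R :=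
  match a, b with
  | Some x, Some y => Some (x + y)
  | _, _ => None
  end.

Definition HVC (r : R) n (P : {set n.-tuple bool}) (x : n.-tuple bool) : option R :=
  let s := sort_by (@LO n) P in
  let i := index x s in
  let prev1 : R := if i == 0%N then - r else (LO (nth x s i.-1))%:R in
  let next2 : R := if i.+1 == size s then - r else (TZ (nth x s i.+1))%:R in
  Some (((LO x)%:R - prev1) * ((TZ x)%:R - next2)).

Definition cd_obj n (g : n.-tuple bool -> nat) (P : {set n.-tuple bool}) (x : n.-tuple bool)
  : option R :=
  let s := sort_by g P in
  let i := index x s in
  let fmax := (\max_(y in P) g y)%N in
  let fmin := (\big[minn/fmax]_(y in P) g y)%N in
  if (i == 0%N) || (i.+1 == size s) then None
  else Some (((g (nth x s i.+1))%:R - (g (nth x s i.-1))%:R) / (fmax%:R - fmin%:R)).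

Definition CDC n (P : {set n.-tuple bool}) (x : n.-tuple bool) : option R :=
  add_score (add_score (Some 0) (cd_obj (@LO n) P x)) (cd_obj (@TZ n) P x).

Inductive measure := CDCm | HVCm.

Definition score_of (r : R) (m : measure) n : {set n.-tuple bool} -> n.-tuple bool -> option R :=
  match m with CDCm => @CDC n | HVCm => @HVC r n end.

Variable sc : forall n, {set n.-tuple bool} -> n.-tuple bool -> option R.
Variable n : nat.

Definition best (P : {set n.-tuple bool}) : {set n.-tuple bool} :=
  [set x in P | [forall y in P, le_score (sc P y) (sc P x)]].

Definition kernel (P P' : {set n.-tuple bool}) : R :=
  \sum_(x in best P) (#|best P|%:R)^-1 *
    \sum_(i < n) (n%:R)^-1 * (semo_update P (flip x i) == P')%:R.

Definition init (P : {set n.-tuple bool}) : R :=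
  \sum_(s : n.-tuple bool) ((2 ^ n)%N%:R)^-1 * (P == [set s])%:R.

(* surv t P = Pr[P_t = P and f(P_k) <> F* for all k <= t] *)
Fixpoint surv (t : nat) : {ffun {set n.-tuple bool} -> R} :=
  match t with
  | 0 => [ffun P => if front_found P then 0 else init P]
  | t'.+1 => [ffun P' => if front_found P' then 0
                        else \sum_(P : {set n.-tuple bool}) surv t' P * kernel P P']
  end.

(* Pr[T > t] *)
Definition not_done_prob (t : nat) : R := \sum_(P : {set n.-tuple bool}) surv t P.

End Scores.

(* Every population that SEMO reaches is admissible: either a single string
   that is not Pareto optimal, or a run {1^k 0^(n-k) | i <= k <= j} of
   consecutive points of the Pareto front.  On admissible populations the
   potential (n + 1 - |P|) + sum_(x in P) (n - LO x - TZ x) never increases,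
   and it drops when the parent is a single string flipped at its first zero,
   or an end of the run flipped so as to extend it.  Under HDC at least half
   of the selectable parents are of this kind: with the crowding distance
   exactly the two ends of the run have maximal (infinite) score, and with the
   hypervolume contribution for the reference point (-r, -r), r > 0, every
   maximiser is an end that can be extended.  So the potential, initially at
   most 2n, decreases by at least 1/(2n) per iteration in expectation, and
   the additive drift theorem bounds the expected time by 4n^2. *)

From mathcomp Require Import all_boot all_order all_algebra.
From mathcomp Require Import zify lra.
Set Implicit Arguments. Unset Strict Implicit. Unset Printing Implicit Defensive.
Import Order.TTheory GRing.Theory Num.Theory.

Lemma index_rev_uniq (T : eqType) (x : T) s : uniq s -> x \in s ->
  index x (rev s) = size s - (index x s).+1.
Proof.
move=> s_uniq xs; have lt_xs : (index x s < size s)%N by rewrite index_mem.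
have nth_x : nth x (rev s) (size s - (index x s).+1) = x.
  by rewrite nth_rev ?subnSK ?subKn ?nth_index //; lia.
by rewrite -{1}nth_x index_uniq ?rev_uniq ?size_rev //; lia.
Qed.

Lemma leq_sum_strict n (D : 'I_n -> nat) d (b : bool) : (forall i, D i <= d) ->
  (b -> exists i, D i < d) -> (\sum_(i < n) D i + b <= n * d).
Proof.
move=> le_Dd lt_Dd; rewrite -[X in (_ <= X * _)]card_ord -sum_nat_const.
case: b lt_Dd => [/(_ isT) [i0 lt_i0]|_]; last by rewrite addn0 leq_sum.
rewrite (bigD1 i0) //= [X in (_ <= X)](bigD1 i0) //= addnAC addn1.
by rewrite leq_add // leq_sum.
Qed.

Lemma sum_pred_card (T : finType) (A : {pred T}) (p : pred T) :
  \sum_(x in A) p x = #|[set x in A | p x]|.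
Proof. by rewrite -sum1dep_card big_mkcondr; apply: eq_bigr => x _; case: (p x). Qed.

Section LeadingOnesTrailingZeros.
Variable n : nat.
Implicit Types (x y : n.-tuple bool) (i j : 'I_n).

Lemma LO_leq x : LO x <= n.
Proof. by rewrite /LO -{2}(size_tuple x) find_size. Qed.

Lemma tnth_ltn_LO x j : j < LO x -> tnth x j.
Proof. by move/(before_find false); rewrite (tnth_nth false) => /negbFE. Qed.

Lemma tnth_LO x (lt_LO_n : LO x < n) : ~~ tnth x (Ordinal lt_LO_n).
Proof.
by rewrite (tnth_nth false) /=; apply: (nth_find false); rewrite has_find size_tuple.
Qed.

Lemma LO_leq_unset x j : ~~ tnth x j -> LO x <= j.
Proof. by apply: contraR; rewrite -ltnNge => /tnth_ltn_LO ->. Qed.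

Lemma leq_LO x k : k <= n -> (forall j, j < k -> tnth x j) -> k <= LO x.
Proof.
move=> le_kn ones; rewrite leqNgt; apply/negP => lt_LO_k.
have lt_LO_n : LO x < n by apply: leq_trans le_kn.
by have := tnth_LO lt_LO_n; rewrite ones.
Qed.

Lemma tnth_flip x i j : tnth (flip x i) j = if j == i then ~~ tnth x j else tnth x j.
Proof. by rewrite tnth_mktuple. Qed.

Lemma LO_flip_ltn x i : i < LO x -> LO (flip x i) = i.
Proof.
move=> lt_iLO; apply/eqP; rewrite eqn_leq; apply/andP; split.
  by apply: LO_leq_unset; rewrite tnth_flip eqxx tnth_ltn_LO.
apply: leq_LO => [|j lt_ji]; first exact: ltnW.
by rewrite tnth_flip ifN ?neq_ltn ?lt_ji ?tnth_ltn_LO ?(ltn_trans lt_ji).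
Qed.

Lemma LO_flip_gtn x i : LO x < i -> LO (flip x i) = LO x.
Proof.
move=> lt_LOi; have lt_LO_n : LO x < n by apply: ltn_trans (ltn_ord i).
apply/eqP; rewrite eqn_leq; apply/andP; split.
  apply: (@LO_leq_unset _ (Ordinal lt_LO_n)).
  by rewrite tnth_flip ifN ?tnth_LO // neq_ltn lt_LOi.
apply: leq_LO => [|j lt_jLO]; first exact: LO_leq.
by rewrite tnth_flip ifN ?tnth_ltn_LO // neq_ltn (ltn_trans lt_jLO).
Qed.

Lemma LO_flip_eq x i : nat_of_ord i = LO x -> LO x < LO (flip x i).
Proof.
move=> eq_iLO; have lt_LO_n : LO x < n by rewrite -eq_iLO.
have -> : i = Ordinal lt_LO_n by apply: val_inj.
apply: leq_LO => // j; rewrite ltnS leq_eqVlt => /predU1P [eq_jLO|lt_jLO].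
  have -> : j = Ordinal lt_LO_n by apply: val_inj.
  by rewrite tnth_flip eqxx tnth_LO.
by rewrite tnth_flip ifN ?tnth_ltn_LO // neq_ltn lt_jLO.
Qed.

(* Reversal followed by complementation exchanges LO and TZ: the TZ lemmas
   below are transported from the LO ones along it. *)
Definition mirror x : n.-tuple bool := map_tuple negb (rev_tuple x).

Lemma tnth_mirror x j : tnth (mirror x) j = ~~ tnth x (rev_ord j).
Proof.
by rewrite tnth_map !(tnth_nth false) /= nth_rev ?size_tuple.
Qed.

Lemma TZ_mirror x : TZ x = LO (mirror x).
Proof. by rewrite /LO find_map; apply: eq_find => b; rewrite /= negbK. Qed.

Lemma mirror_flip x i : mirror (flip x i) = flip (mirror x) (rev_ord i).
Proof.
apply: eq_from_tnth => j; rewrite tnth_mirror !tnth_flip tnth_mirror.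
by rewrite -{1}(rev_ordK i) (inj_eq rev_ord_inj); case: (_ == _).
Qed.

Lemma TZ_leq x : TZ x <= n.
Proof. by rewrite TZ_mirror LO_leq. Qed.

Lemma tnth_ltn_TZ x j : rev_ord j < TZ x -> ~~ tnth x j.
Proof. by rewrite TZ_mirror => /tnth_ltn_LO; rewrite tnth_mirror rev_ordK. Qed.

Lemma TZ_flip_ltn x i : rev_ord i < TZ x -> TZ (flip x i) = rev_ord i.
Proof. by rewrite !TZ_mirror mirror_flip; apply: LO_flip_ltn. Qed.

Lemma TZ_flip_gtn x i : TZ x < rev_ord i -> TZ (flip x i) = TZ x.
Proof. by rewrite !TZ_mirror mirror_flip; apply: LO_flip_gtn. Qed.

Lemma TZ_flip_eq x i : nat_of_ord (rev_ord i) = TZ x -> TZ x < TZ (flip x i).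
Proof. by rewrite !TZ_mirror mirror_flip; apply: LO_flip_eq. Qed.

Lemma LOTZ_leq x : LO x + TZ x <= n.
Proof.
rewrite leqNgt; apply/negP => gt_n.
have := LO_leq x; have := TZ_leq x => le_TZ le_LO.
have lt_j_n : n - TZ x < n by lia.
have := @tnth_ltn_TZ x (Ordinal lt_j_n); rewrite tnth_ltn_LO /=; lia.
Qed.

Definition pareto k : n.-tuple bool := [tuple j < k | j < n].

Lemma tnth_pareto k j : tnth (pareto k) j = (j < k).
Proof. exact: tnth_mktuple. Qed.

Lemma LO_pareto k : k <= n -> LO (pareto k) = k.
Proof.
move=> le_kn; apply/eqP; rewrite eqn_leq; apply/andP; split; last first.
  by apply: leq_LO => // j; rewrite tnth_pareto.
have [lt_kn|le_nk] := ltnP k n; last exact: leq_trans (LO_leq _) le_nk.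
by apply: (@LO_leq_unset _ (Ordinal lt_kn)); rewrite tnth_pareto ltnn.
Qed.

Lemma mirror_pareto k : k <= n -> mirror (pareto k) = pareto (n - k).
Proof.
move=> le_kn; apply: eq_from_tnth => j.
by rewrite tnth_mirror !tnth_pareto /= -leqNgt; have := ltn_ord j; lia.
Qed.

Lemma TZ_pareto k : k <= n -> TZ (pareto k) = n - k.
Proof. by move=> le_kn; rewrite TZ_mirror mirror_pareto ?LO_pareto ?leq_subr. Qed.

Lemma pareto_of_optimal x : LO x + TZ x = n -> x = pareto (LO x).
Proof.
move=> opt; apply: eq_from_tnth => j; rewrite tnth_pareto.
case: ltnP => [/tnth_ltn_LO //|le_LOj].
by apply/negbTE/tnth_ltn_TZ; rewrite /=; have := ltn_ord j; lia.
Qed.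

Lemma pareto_inj k l : k <= n -> l <= n -> pareto k = pareto l -> k = l.
Proof. by move=> le_kn le_ln eq_kl; rewrite -(LO_pareto le_kn) eq_kl LO_pareto. Qed.

Lemma flip_pareto_up k i : nat_of_ord i = k -> flip (pareto k) i = pareto k.+1.
Proof.
move=> eq_ik; apply: eq_from_tnth => j; rewrite tnth_flip !tnth_pareto ltnS.
have [->|ne_ji] := eqVneq j i; first by rewrite eq_ik ltnn leqnn.
have /negbTE ne_ji' : nat_of_ord j != i := ne_ji.
by rewrite [RHS]leq_eqVlt -eq_ik ne_ji'.
Qed.

Lemma flip_pareto_down k i : i.+1 = k -> flip (pareto k) i = pareto i.
Proof.
move=> eq_ik; apply: eq_from_tnth => j; rewrite tnth_flip !tnth_pareto -eq_ik ltnS.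
have [->|ne_ji] := eqVneq j i; first by rewrite ltnn leqnn.
have /negbTE ne_ji' : nat_of_ord j != i := ne_ji.
by rewrite leq_eqVlt ne_ji'.
Qed.

Lemma dominates_ltn y x :
  LO x <= LO y -> TZ x <= TZ y -> (LO x < LO y) || (TZ x < TZ y) -> dominates y x.
Proof.
move=> le_LO le_TZ lt_LOTZ; rewrite /dominates /weakly_dominates le_LO le_TZ /=.
by apply: contraTneq lt_LOTZ => -[-> ->]; rewrite !ltnn.
Qed.

Lemma flip_weakly_dominates x i :
  LO x <= i -> TZ x <= rev_ord i -> weakly_dominates (flip x i) x.
Proof.
move=> le_LOi le_TZi; apply/andP; split.
  by case: ltngtP le_LOi => // [/LO_flip_gtn ->|/esym/LO_flip_eq/ltnW].
by case: ltngtP le_TZi => // [/TZ_flip_gtn ->|/esym/TZ_flip_eq/ltnW].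
Qed.

Lemma dominates_flip x i :
  (i < LO x /\ TZ x < rev_ord i) \/ (LO x < i /\ rev_ord i < TZ x) ->
  dominates x (flip x i).
Proof.
case=> [[lt_iLO lt_TZi]|[lt_LOi lt_iTZ]].
  apply: dominates_ltn; rewrite ?(LO_flip_ltn lt_iLO) ?(TZ_flip_gtn lt_TZi) ?lt_iLO //.
  exact: ltnW.
apply: dominates_ltn; rewrite ?(LO_flip_gtn lt_LOi) ?(TZ_flip_ltn lt_iTZ) ?lt_iTZ ?orbT //.
exact: ltnW.
Qed.

Lemma flip_nonoptimal x i : LO x + TZ x < n ->
  ~~ dominates x (flip x i) -> weakly_dominates (flip x i) x.
Proof.
move=> lt_n /negP ndom; have lt_in := ltn_ord i.
have [lt_iLO|le_LOi] := ltnP i (LO x).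
  by case: ndom; apply: dominates_flip; left; split=> //=; lia.
have [lt_iTZ|le_TZi] := ltnP (rev_ord i) (TZ x).
  by case: ndom; apply: dominates_flip; right; split=> //; move: lt_iTZ => /=; lia.
exact: flip_weakly_dominates.
Qed.

Lemma pareto_dominates_flip k i : k <= n -> i.+1 != k -> nat_of_ord i != k ->
  dominates (pareto k) (flip (pareto k) i).
Proof.
move=> le_kn ne_ik1 ne_ik; have lt_in := ltn_ord i.
apply: dominates_flip; rewrite LO_pareto ?TZ_pareto //=.
have [lt_ik|lt_ki] := ltnP i k.
  left; split=> //; move: ne_ik1 => /eqP; lia.
right; split; move: ne_ik => /eqP; lia.
Qed.

Lemma pareto_not_dominated y z : LO y + TZ y = n -> LO z + TZ z = n -> ~~ dominates z y.
Proof.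
move=> opt_y opt_z; apply/negP => /andP [/andP [le_LO le_TZ]].
have eq_LO : LO y = LO z by lia.
have eq_TZ : TZ y = TZ z by lia.
by rewrite /fobj eq_LO eq_TZ eqxx.
Qed.

End LeadingOnesTrailingZeros.

Section Populations.
Variable n : nat.
Implicit Types (x y z : n.-tuple bool) (P : {set n.-tuple bool}).
Local Notation pareto := (@pareto n).

Lemma semo_update_dominated P y z : z \in P -> dominates z y -> semo_update P y = P.
Proof. by move=> zP dom_zy; rewrite /semo_update ifT //; apply/existsP; exists z; rewrite zP. Qed.

Lemma semo_update_single x y :
  ~~ dominates x y -> weakly_dominates y x -> semo_update [set x] y = [set y].
Proof.
move=> ndom_xy wdom_yx; rewrite /semo_update ifF; last first.
  by apply/negbTE/existsP => -[z /andP [/set1P -> dom_xy]]; rewrite dom_xy in ndom_xy.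
apply/setP => z; rewrite !inE; case: (eqVneq z x) => [->|_]; last by rewrite orbF.
by rewrite wdom_yx orbF.
Qed.

Definition pareto_seq i j : seq (n.-tuple bool) := [seq pareto k | k <- iota i (j - i).+1].

Definition segment i j : {set n.-tuple bool} := [set:: pareto_seq i j].

Lemma size_pareto_seq i j : size (pareto_seq i j) = (j - i).+1.
Proof. by rewrite size_map size_iota. Qed.

Lemma nth_pareto_seq i j x0 t : t <= j - i -> nth x0 (pareto_seq i j) t = pareto (i + t).
Proof. by move=> le_t; rewrite (nth_map 0) ?size_iota ?nth_iota. Qed.

Lemma pareto_seq_uniq i j : i <= j <= n -> uniq (pareto_seq i j).
Proof.
move=> le_ijn; rewrite map_inj_in_uniq ?iota_uniq // => k l.
by rewrite !mem_iota => k_in l_in /pareto_inj; apply; lia.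
Qed.

Lemma mem_pareto_seq i j x : i <= j <= n ->
  (x \in pareto_seq i j) = (i <= LO x <= j) && (x == pareto (LO x)).
Proof.
move=> le_ijn; apply/mapP/andP => [[k]|[LO_in /eqP x_opt]]; last first.
  by exists (LO x); rewrite // mem_iota; lia.
by rewrite mem_iota => k_in ->; rewrite LO_pareto ?eqxx; [split; lia | lia].
Qed.

Lemma mem_segment i j x : i <= j <= n ->
  (x \in segment i j) = (i <= LO x <= j) && (x == pareto (LO x)).
Proof. by move=> le_ijn; rewrite inE mem_pareto_seq. Qed.

Lemma pareto_in_segment i j k : i <= j <= n -> k <= n ->
  (pareto k \in segment i j) = (i <= k <= j).
Proof. by move=> le_ijn le_kn; rewrite mem_segment // LO_pareto // eqxx andbT. Qed.

Lemma pareto_optimal k : k <= n -> LO (pareto k) + TZ (pareto k) = n.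
Proof. by move=> le_kn; rewrite LO_pareto ?TZ_pareto ?subnKC. Qed.

Lemma segment_optimal i j x : i <= j <= n -> x \in segment i j -> LO x + TZ x = n.
Proof.
move=> le_ijn; rewrite mem_segment // => /andP [_ /eqP ->].
exact/pareto_optimal/LO_leq.
Qed.

Lemma card_segment i j : i <= j <= n -> #|segment i j| = (j - i).+1.
Proof. by move=> le_ijn; rewrite cardsE -size_pareto_seq; apply/card_uniqP/pareto_seq_uniq. Qed.

Lemma segment1 k : segment k k = [set pareto k].
Proof. by rewrite /segment /pareto_seq subnn set_seq1. Qed.

Lemma semo_update_segment i j k : i <= j <= n -> k <= n -> i <= k.+1 -> k <= j.+1 ->
  semo_update (segment i j) (pareto k) = segment (minn i k) (maxn j k).
Proof.
move=> le_ijn le_kn le_ik le_kj; have le_mn : minn i k <= maxn j k <= n by lia.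
rewrite /semo_update ifF; last first.
  apply/negbTE/existsP => -[z /andP [zP]].
  by rewrite (negbTE (pareto_not_dominated (pareto_optimal le_kn) (segment_optimal le_ijn zP))).
apply/setP => z; rewrite in_setU1 in_set !mem_segment //.
have [->|ne_zk] := eqVneq z (pareto k); first by rewrite LO_pareto // eqxx; lia.
rewrite /weakly_dominates LO_pareto ?TZ_pareto //.
case: eqP => [opt_z|]; rewrite ?andbF //= !andbT.
have /eqP ne_LOk : LO z != k by apply: contra_neq ne_zk => <-.
have := pareto_optimal (LO_leq z); rewrite -opt_z => LOTZ_z.
apply/idP/idP; lia.
Qed.

Definition potential P : nat := (n.+1 - #|P|) + \sum_(x in P) (n - (LO x + TZ x)).

Lemma potential_single x : potential [set x] = n + (n - (LO x + TZ x)).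
Proof. by rewrite /potential cards1 big_set1 subSS subn0. Qed.

Lemma potential_segment i j : i <= j <= n -> potential (segment i j) = n - (j - i).
Proof.
move=> le_ijn; rewrite /potential card_segment // subSS big1 ?addn0 // => x xP.
by rewrite (segment_optimal le_ijn xP) subnn.
Qed.

Definition admissible P : bool :=
  [exists x, (P == [set x]) && (LO x + TZ x < n)] ||
  [exists i : 'I_n.+1, exists j : 'I_n.+1, (i <= j) && (P == segment i j)].

Lemma admissibleP P : reflect
  ((exists2 x, P = [set x] & LO x + TZ x < n) \/
   (exists i j, i <= j <= n /\ P = segment i j))
  (admissible P).
Proof.
apply: (iffP orP) => [[|]|[[x -> lt_n]|[i [j [le_ijn ->]]]]].
- by case/existsP=> x /andP [/eqP -> lt_n]; left; exists x.
- case/existsP=> i /existsP [j /andP [le_ij /eqP ->]]; right.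
  by exists i, j; rewrite le_ij -ltnS ltn_ord.
- by left; apply/existsP; exists x; rewrite eqxx.
- have lt_in : i < n.+1 by lia.
  have lt_jn : j < n.+1 by lia.
  right; apply/existsP; exists (Ordinal lt_in); apply/existsP; exists (Ordinal lt_jn).
  by rewrite /= eqxx andbT; case/andP: le_ijn.
Qed.

Lemma admissible_segment i j : i <= j <= n -> admissible (segment i j).
Proof. by move=> le_ijn; apply/admissibleP; right; exists i, j. Qed.

Lemma admissible_single x : admissible [set x].
Proof.
have [lt_n|ge_n] := ltnP (LO x + TZ x) n; first by apply/admissibleP; left; exists x.
have opt_x : LO x + TZ x = n by apply/eqP; rewrite eqn_leq LOTZ_leq.
by rewrite (pareto_of_optimal opt_x) -segment1 admissible_segment // leqnn LO_leq.
Qed.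

Lemma admissible_update_single x b : LO x + TZ x < n ->
  admissible (semo_update [set x] (flip x b)) /\
  potential (semo_update [set x] (flip x b)) <= potential [set x].
Proof.
move=> lt_n; have [dom|ndom] := boolP (dominates x (flip x b)).
  by rewrite (semo_update_dominated (set11 x) dom) admissible_single.
have wdom := flip_nonoptimal lt_n ndom; case/andP: (wdom) => le_LO le_TZ.
by rewrite semo_update_single // admissible_single !potential_single; split=> //; lia.
Qed.

Lemma semo_update_segment_flip i j k b : i <= k <= j -> j <= n ->
  exists i' j', [/\ i' <= i, j <= j', j' <= n &
    semo_update (segment i j) (flip (pareto k) b) = segment i' j'].
Proof.
move=> le_ikj le_jn; have le_ijn : i <= j <= n by lia.
have le_kn : k <= n by lia.
have lt_bn := ltn_ord b.
have [eq_bk1|ne_bk1] := eqVneq b.+1 k.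
  exists (minn i b), (maxn j b).
  by rewrite flip_pareto_down // semo_update_segment //; first split=> //; lia.
have [eq_bk|ne_bk] := eqVneq (nat_of_ord b) k.
  exists (minn i k.+1), (maxn j k.+1).
  by rewrite flip_pareto_up // semo_update_segment //; first split=> //; lia.
exists i, j; split=> //; apply: semo_update_dominated (pareto_dominates_flip le_kn ne_bk1 ne_bk).
by rewrite pareto_in_segment.
Qed.

Lemma admissible_update P x b : admissible P -> x \in P ->
  admissible (semo_update P (flip x b)) /\
  potential (semo_update P (flip x b)) <= potential P.
Proof.
case/admissibleP => [[z -> lt_n]|[i [j [le_ijn ->]]]].
  by move/set1P => ->; apply: admissible_update_single.
rewrite mem_segment // => /andP [le_LO /eqP ->].
have [|i' [j' [le_i le_j le_jn ->]]] := semo_update_segment_flip b le_LO; first by lia.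
by rewrite admissible_segment ?potential_segment //; lia.
Qed.

Definition improvable P x : bool :=
  [exists b : 'I_n, potential (semo_update P (flip x b)) < potential P].

Lemma improvable_single x : LO x + TZ x < n -> improvable [set x] x.
Proof.
move=> lt_n; have lt_LO_n : LO x < n by lia.
apply/existsP; exists (Ordinal lt_LO_n); set y := flip x _.
have lt_LO : LO x < LO y by apply: LO_flip_eq.
have wdom : weakly_dominates y x by apply: flip_weakly_dominates => /=; lia.
rewrite semo_update_single //; last by rewrite /dominates /weakly_dominates leqNgt lt_LO.
by rewrite !potential_single; case/andP: wdom => _ le_TZ; have := LOTZ_leq y; lia.
Qed.

Lemma improvable_segment_low i j : 0 < i <= j -> j <= n -> improvable (segment i j) (pareto i).
Proof.
move=> le_0ij le_jn; have lt_bn : i.-1 < n by lia.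
apply/existsP; exists (Ordinal lt_bn); rewrite flip_pareto_down /=; last by lia.
by rewrite semo_update_segment ?potential_segment; lia.
Qed.

Lemma improvable_segment_high i j : i <= j < n -> improvable (segment i j) (pareto j).
Proof.
move=> le_ijn; have lt_jn : j < n by case/andP: le_ijn.
apply/existsP; exists (Ordinal lt_jn); rewrite flip_pareto_up //.
by rewrite semo_update_segment ?potential_segment; lia.
Qed.

Lemma segment_front_found : front_found (segment 0 n).
Proof.
have le_0n : 0 <= n <= n by rewrite leqnn.
apply/andP; split.
  apply/allP => y /mapP [k]; rewrite mem_iota add0n ltnS => /= le_kn ->.
  apply/existsP; exists (pareto k); rewrite andbC.
  by rewrite pareto_in_segment // le_kn /fobj LO_pareto // TZ_pareto // eqxx.
apply/forall_inP => x xP; apply/mapP; exists (LO x); first by rewrite mem_iota ltnS LO_leq.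
by rewrite /fobj -[in X in _ = (_, X - _)](segment_optimal le_0n xP) addKn.
Qed.

Lemma sort_by_sorted (g : n.-tuple bool -> nat) P s : uniq s ->
  sorted (fun a b => g a <= g b) s -> {in s &, injective g} -> P =i s -> sort_by g P = s.
Proof.
move=> s_uniq s_sorted g_inj P_s.
apply/esym/(@sorted_eq_in _ (fun a b => g a <= g b)) => //.
- by move=> a b c _ _ _; apply: leq_trans.
- by move=> a b a_s b_s /anti_leq; apply: g_inj.
- by apply: sort_sorted => a b; apply: leq_total.
rewrite perm_sym perm_sort; apply: uniq_perm => //; first exact: enum_uniq.
by move=> x; rewrite mem_enum P_s.
Qed.

Lemma sort_by_LO_segment i j : i <= j <= n -> sort_by (@LO n) (segment i j) = pareto_seq i j.
Proof.
move=> le_ijn; have le_in k : k \in iota i (j - i).+1 -> k <= n by rewrite mem_iota; lia.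
apply: sort_by_sorted; rewrite ?pareto_seq_uniq //.
- apply: (homo_sorted_in (P := fun k => k <= n)); last exact: iota_sorted.
    by move=> k l le_kn le_ln /=; rewrite !LO_pareto.
  by apply/allP => k /le_in.
- by move=> a b /mapP [k /le_in le_kn ->] /mapP [l /le_in le_ln ->]; rewrite !LO_pareto // => ->.
by move=> x; rewrite inE.
Qed.

Lemma sort_by_TZ_segment i j : i <= j <= n ->
  sort_by (@TZ n) (segment i j) = rev (pareto_seq i j).
Proof.
move=> le_ijn; have le_in k : k \in iota i (j - i).+1 -> k <= n by rewrite mem_iota; lia.
apply: sort_by_sorted; rewrite ?rev_uniq ?pareto_seq_uniq //.
- rewrite rev_sorted; apply: (homo_sorted_in (P := fun k => k <= n)); last exact: iota_sorted.
    by move=> k l le_kn le_ln /= le_kl; rewrite !TZ_pareto // leq_sub2l.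
  by apply/allP => k /le_in.
- move=> a b; rewrite !mem_rev => /mapP [k /le_in le_kn ->] /mapP [l /le_in le_ln ->].
  by rewrite !TZ_pareto // => eq_kl; congr pareto; lia.
by move=> x; rewrite inE mem_rev.
Qed.

Lemma index_pareto_seq i j k : i <= k <= j -> j <= n ->
  index (pareto k) (pareto_seq i j) = k - i.
Proof.
move=> le_ikj le_jn.
have <- : nth (pareto k) (pareto_seq i j) (k - i) = pareto k.
  by rewrite nth_pareto_seq ?subnKC //; lia.
by rewrite index_uniq ?size_pareto_seq ?pareto_seq_uniq //; lia.
Qed.

End Populations.

Section DiversityScores.
Variables (R : realFieldType) (n : nat).
Local Notation pareto := (@pareto n).
Local Notation pareto_seq := (@pareto_seq n).
Local Notation segment := (@segment n).
Local Open Scope ring_scope.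

Lemma CDC_segment_end i j k : (i <= j <= n)%N -> (k == i) || (k == j) ->
  CDC R (segment i j) (pareto k) = None.
Proof.
move=> le_ijn end_k; have le_ikj : (i <= k <= j)%N by case/orP: end_k => /eqP ->; lia.
rewrite /CDC /cd_obj sort_by_LO_segment // index_pareto_seq //; last by lia.
by rewrite size_pareto_seq; case/orP: end_k => /eqP ->; rewrite ?subnn ?eqxx ?orbT.
Qed.

Lemma CDC_segment_interior i j k : (j <= n)%N -> (i < k < j)%N ->
  CDC R (segment i j) (pareto k) != None.
Proof.
move=> le_jn lt_ikj; have le_ijn : (i <= j <= n)%N by lia.
have k_in : pareto k \in pareto_seq i j by rewrite mem_pareto_seq // LO_pareto ?eqxx ?andbT; lia.
rewrite /CDC /cd_obj sort_by_LO_segment // sort_by_TZ_segment //.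
rewrite index_rev_uniq ?pareto_seq_uniq // size_rev size_pareto_seq index_pareto_seq; try lia.
have -> : ((k - i == 0) || ((k - i).+1 == (j - i).+1))%N = false by apply/negbTE; lia.
have -> : ((j - i).+1 - (k - i).+1 == 0)%N || (((j - i).+1 - (k - i).+1).+1 == (j - i).+1)%N
  = false.
  by apply/negbTE; lia.
by [].
Qed.

Lemma HVC_segment (r : R) i j k : (i <= k <= j)%N -> (j <= n)%N ->
  HVC r (segment i j) (pareto k) =
  Some ((if k == i then k%:R + r else 1) * (if k == j then (n - k)%:R + r else 1)).
Proof.
move=> le_ikj le_jn; have le_ijn : (i <= j <= n)%N by lia.
have le_kn : (k <= n)%N by lia.
rewrite /HVC sort_by_LO_segment // index_pareto_seq // size_pareto_seq LO_pareto // TZ_pareto //.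
congr (Some (_ * _)).
- have [->|ne_ki] := eqVneq k i; first by rewrite subnn eqxx opprK.
  rewrite ifF; last by apply/negbTE; move: ne_ki => /eqP; lia.
  rewrite nth_pareto_seq ?LO_pareto; try lia.
  have {1}-> : k = ((i + (k - i).-1) + 1)%N by lia.
  by rewrite natrD addrC addKr.
- have [->|ne_kj] := eqVneq k j; first by rewrite eqxx opprK.
  rewrite ifF; last by apply/negbTE; move: ne_kj => /eqP; lia.
  rewrite nth_pareto_seq ?TZ_pareto; try lia.
  have {1}-> : (n - k = (n - (i + (k - i).+1)) + 1)%N by lia.
  by rewrite natrD addrC addKr.
Qed.

End DiversityScores.

Section HighestDiversity.
Variables (R : realFieldType) (sc : forall n, {set n.-tuple bool} -> n.-tuple bool -> option R).
Variable n : nat.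
Implicit Types (P : {set n.-tuple bool}) (x y : n.-tuple bool).

Lemma le_score_refl (a : option R) : le_score a a.
Proof. by case: a => //= a; rewrite lexx. Qed.

Lemma le_score_total (a b : option R) : le_score a b || le_score b a.
Proof. by case: a; case: b => //= a b; apply: le_total. Qed.

Lemma le_score_trans (a b c : option R) : le_score a b -> le_score b c -> le_score a c.
Proof. by case: a; case: b; case: c => //= c b a; apply: le_trans. Qed.

Lemma exists_max_score (T : eqType) (f : T -> option R) (s : seq T) : s != [::] ->
  exists2 a, a \in s & forall b, b \in s -> le_score (f b) (f a).
Proof.
elim: s => // a s IH _; have [->|s_neq0] := eqVneq s [::].
  by exists a => [|b]; rewrite mem_seq1 // => /eqP ->; apply: le_score_refl.
have [c c_in c_max] := IH s_neq0.
have [le_ac|le_ca] := orP (le_score_total (f a) (f c)).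
  exists c; first by rewrite inE c_in orbT.
  by move=> b; rewrite inE => /predU1P [->|]; [|apply: c_max].
exists a; first exact: mem_head.
move=> b; rewrite inE => /predU1P [->|b_in]; first exact: le_score_refl.
exact: le_score_trans (c_max _ b_in) le_ca.
Qed.

Lemma in_best P x :
  (x \in best sc P) = (x \in P) && [forall y in P, le_score (sc P y) (sc P x)].
Proof. by rewrite inE. Qed.

Lemma best_sub P : best sc P \subset P.
Proof. by apply/subsetP => x; rewrite in_best => /andP []. Qed.

Lemma card_best_gt0 P : P != set0 -> 0 < #|best sc P|.
Proof.
move=> P_neq0; have [x] : exists2 x, x \in enum P & forall y, y \in enum P ->
    le_score (sc P y) (sc P x).
  by apply: exists_max_score; rewrite -size_eq0 -cardE cards_eq0.
rewrite mem_enum => xP x_max; apply/card_gt0P; exists x; rewrite in_best xP.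
by apply/forall_inP => y yP; apply: x_max; rewrite mem_enum.
Qed.

Lemma best_set1 x : best sc [set x] = [set x].
Proof.
apply/setP => y; rewrite in_best andb_idr // => /set1P ->.
by apply/forall_inP => z /set1P ->; apply: le_score_refl.
Qed.

Lemma top_in_best P x : x \in P -> sc P x = None -> x \in best sc P.
Proof. by move=> xP x_top; rewrite in_best xP x_top; apply/forall_inP => y; case: (sc P y). Qed.

Lemma finite_notin_best P x y : y \in P -> sc P y = None -> sc P x != None ->
  x \notin best sc P.
Proof.
move=> yP y_top x_fin; rewrite in_best negb_and; apply/orP; right.
by apply/forall_inP => /(_ y yP); rewrite y_top; case: (sc P x) x_fin.
Qed.

End HighestDiversity.

Section HDCOnSegments.
Variables (R : realFieldType) (r : R) (n : nat).
Local Open Scope ring_scope.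
Local Notation pareto := (@pareto n).
Local Notation segment := (@segment n).

Lemma best_CDC_segment i j : (i < j <= n)%N ->
  best (score_of r CDCm) (segment i j) = [set pareto i; pareto j].
Proof.
move=> lt_ijn; have le_ijn : (i <= j <= n)%N by lia.
have end_top k : (k == i) || (k == j) -> score_of r CDCm (segment i j) (pareto k) = None.
  exact: CDC_segment_end.
apply/setP => x; rewrite in_set2; apply/idP/idP => [x_best|].
  have := subsetP (best_sub _ _) _ x_best; rewrite mem_segment // => /andP [le_ikj /eqP x_opt].
  move: x_best; rewrite x_opt; set k := LO x in le_ikj x_opt *.
  have [->|ne_ki] := eqVneq k i; first by rewrite eqxx.
  have [->|ne_kj] := eqVneq k j; first by rewrite eqxx orbT.
  apply: contraLR => _; apply: (finite_notin_best (y := pareto i)).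
  - by rewrite pareto_in_segment //; lia.
  - by apply: end_top; rewrite eqxx.
  - by apply: CDC_segment_interior; move: ne_ki ne_kj => /eqP ? /eqP ?; lia.
by case/orP => /eqP ->; apply: top_in_best;
  rewrite ?end_top ?eqxx ?orbT ?pareto_in_segment //; lia.
Qed.

Lemma best_HVC_segment_improvable i j x : 0 < r -> (i < j <= n)%N ->
  (0 < i)%N || (j < n)%N -> x \in best (score_of r HVCm) (segment i j) ->
  improvable (segment i j) x.
Proof.
move=> r_gt0 lt_ijn ends x_best; have le_ijn : (i <= j <= n)%N by lia.
have i_in : pareto i \in segment i j by rewrite pareto_in_segment //; lia.
have j_in : pareto j \in segment i j by rewrite pareto_in_segment //; lia.
move: x_best; rewrite in_best mem_segment // => /andP [/andP [le_ikj /eqP x_opt] x_max].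
have := forall_inP x_max _ i_in; have := forall_inP x_max _ j_in.
rewrite x_opt; set k := LO x in le_ikj x_opt *.
rewrite /score_of !HVC_segment //; [|lia..].
have [ne_ij ne_ji] : i != j /\ j != i by split; apply/eqP; lia.
rewrite !eqxx (negbTE ne_ij) (negbTE ne_ji) mulr1 mul1r /= => le_jk le_ik.
have [eq_ki|ne_ki] := eqVneq k i.
  have [i_eq0|i_gt0] := posnP i; last by rewrite eq_ki; apply: improvable_segment_low; lia.
  move: le_jk; rewrite eq_ki eqxx (negbTE ne_ij) mulr1 i_eq0.
  have : 1 <= (n - j)%:R :> R by rewrite ler1n; lia.
  by lra.
have [eq_kj|ne_kj] := eqVneq k j.
  have [j_ltn|j_eqn] := ltnP j n; first by rewrite eq_kj; apply: improvable_segment_high; lia.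
  move: le_ik; rewrite eq_kj eqxx (negbTE ne_ji) mul1r (_ : n - j = 0)%N; last by lia.
  have : 1 <= i%:R :> R by rewrite ler1n; lia.
  by lra.
move: le_ik le_jk; rewrite (negbTE ne_ki) (negbTE ne_kj) mulr1.
have : 1 <= i%:R :> R \/ 1 <= (n - j)%:R :> R by rewrite !ler1n; lia.
by lra.
Qed.

Lemma best_improvable m (P : {set n.-tuple bool}) : 0 < r -> admissible P -> ~~ front_found P ->
  (#|best (score_of r m) P| <=
   2 * #|[set x in best (score_of r m) P | improvable P x]|)%N.
Proof.
move=> r_gt0 P_adm not_found; set B := best _ P.
suff [B_imp|[le_B2 [y y_B y_imp]]] : {in B, forall x, improvable P x} \/
    (#|B| <= 2)%N /\ exists2 y, y \in B & improvable P y.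
- have /subset_leq_card : B \subset [set x in B | improvable P x].
    by apply/subsetP => x x_B; rewrite inE x_B B_imp.
  by lia.
- have : (0 < #|[set x in B | improvable P x]|)%N.
    by apply/card_gt0P; exists y; rewrite inE y_B.
  by lia.
case/admissibleP: P_adm not_found @B => [[z -> lt_n] _|[i [j [le_ijn ->]]] not_found].
  by left; rewrite best_set1 => x /set1P ->; apply: improvable_single.
have ends : (0 < i)%N || (j < n)%N.
  apply: contraNT not_found; rewrite negb_or -!leqNgt leqn0 => /andP [/eqP i_eq0 le_nj].
  by rewrite i_eq0 (_ : j = n) ?segment_front_found //; lia.
have end_improvable :
    improvable (segment i j) (pareto i) || improvable (segment i j) (pareto j).
  by case/orP: ends => ?; apply/orP; [left; apply: improvable_segment_low |
    right; apply: improvable_segment_high]; lia.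
have [eq_ij|lt_ij] : i = j \/ (i < j)%N by lia.
  move: end_improvable; rewrite -eq_ij orbb segment1 => improvable_i.
  by left; rewrite best_set1 => x /set1P ->.
case: m.
  right; rewrite best_CDC_segment ?cards2; last by lia.
  split; first by case: (_ != _).
  by case/orP: end_improvable => ?; [exists (pareto i) | exists (pareto j)];
    rewrite ?in_set2 ?eqxx ?orbT.
by left => x; apply: best_HVC_segment_improvable => //; lia.
Qed.

End HDCOnSegments.

(* [mass t P] plays the role of Pr[P_t = P and no P_u with u <= t is done] for
   the chain with transition kernel [K]; summed over t it gives the expected
   hitting time of [done]. *)
Section AdditiveDrift.
Variables (R : realFieldType) (T : finType).
Variables (K : T -> T -> R) (done inv : pred T) (Phi : T -> R) (delta : R).
Variable mass : nat -> T -> R.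
Local Open Scope ring_scope.

Hypothesis K_ge0 : forall P Q, 0 <= K P Q.
Hypothesis K_inv : forall P Q, inv P -> ~~ inv Q -> K P Q = 0.
Hypothesis Phi_ge0 : forall P, 0 <= Phi P.
Hypothesis drift : forall P, inv P -> ~~ done P -> \sum_Q K P Q * Phi Q <= Phi P - delta.
Hypothesis mass0_ge0 : forall P, 0 <= mass 0 P.
Hypothesis mass0_done : forall P, done P -> mass 0 P = 0.
Hypothesis mass0_inv : forall P, ~~ inv P -> mass 0 P = 0.
Hypothesis massS : forall t Q, mass t.+1 Q = if done Q then 0 else \sum_P mass t P * K P Q.

Lemma mass_ge0 t P : 0 <= mass t P.
Proof.
elim: t P => [|t IH] P; rewrite ?massS //; case: ifP => // _.
by apply: sumr_ge0 => Q _; apply: mulr_ge0.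
Qed.

Lemma mass_done t P : done P -> mass t P = 0.
Proof. by case: t => [|t] P_done; rewrite ?massS ?P_done ?mass0_done. Qed.

Lemma mass_inv t P : ~~ inv P -> mass t P = 0.
Proof.
elim: t P => [|t IH] P P_inv; rewrite ?massS ?mass0_inv //; case: ifP => // _.
apply: big1 => Q _; have [Q_inv|/IH ->] := boolP (inv Q); last exact: mul0r.
by rewrite K_inv ?mulr0.
Qed.

Definition mean_potential t := \sum_P mass t P * Phi P.

Lemma mean_potential_ge0 t : 0 <= mean_potential t.
Proof. by apply: sumr_ge0 => P _; apply: mulr_ge0; [apply: mass_ge0 | apply: Phi_ge0]. Qed.

Lemma mean_potentialS t : mean_potential t.+1 <= mean_potential t - delta * \sum_P mass t P.
Proof.
apply: (@le_trans _ _ (\sum_Q (\sum_P mass t P * K P Q) * Phi Q)).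
  apply: ler_sum => Q _; rewrite massS; case: ifP => // _; rewrite mul0r.
  by apply: mulr_ge0 => //; apply: sumr_ge0 => P _; apply: mulr_ge0; [apply: mass_ge0|].
under eq_bigr do rewrite mulr_suml.
rewrite exchange_big /= mulr_sumr -sumrB; apply: ler_sum => P _.
under eq_bigr do rewrite -mulrA.
rewrite -mulr_sumr [delta * _]mulrC -mulrBr.
have [P_inv|/(mass_inv t) ->] := boolP (inv P); last by rewrite !mul0r.
have [/(mass_done t) ->|P_ndone] := boolP (done P); first by rewrite !mul0r.
by apply: ler_wpM2l; [apply: mass_ge0 | apply: drift].
Qed.

Theorem additive_drift N : delta * \sum_(t < N) \sum_P mass t P <= mean_potential 0.
Proof.
suff : delta * \sum_(t < N) \sum_P mass t P + mean_potential N <= mean_potential 0.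
  by have := mean_potential_ge0 N; lra.
elim: N => [|N IH]; first by rewrite big_ord0 mulr0 add0r.
apply: le_trans IH; rewrite big_ord_recr /= mulrDr -addrA lerD2l.
by have := mean_potentialS N; lra.
Qed.

End AdditiveDrift.

Section SEMOOnLOTZ.
Variables (R : realFieldType) (r : R) (m : measure) (n : nat).
Local Open Scope ring_scope.
Hypothesis r_gt0 : 0 < r.
Hypothesis n_gt0 : (0 < n)%N.
Local Notation sc := (score_of r m).
Local Notation population := {set n.-tuple bool}.
Implicit Types P Q : population.

Lemma kernel_ge0 P Q : 0 <= kernel sc P Q.
Proof.
apply: sumr_ge0 => x _; rewrite mulr_ge0 ?invr_ge0 ?ler0n //.
by apply: sumr_ge0 => i _; rewrite mulr_ge0 ?invr_ge0 ?ler0n.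
Qed.

Lemma kernel_admissible P Q : admissible P -> ~~ admissible Q -> kernel sc P Q = 0.
Proof.
move=> P_adm Q_nadm; apply: big1 => x x_best; rewrite big1 ?mulr0 // => i _.
have [upd_adm _] := admissible_update i P_adm (subsetP (best_sub sc P) x x_best).
by rewrite (_ : _ == Q = false) ?mulr0 //; apply: contraNF Q_nadm => /eqP <-.
Qed.

Lemma sum_kernel_mul P (F : population -> R) :
  \sum_Q kernel sc P Q * F Q =
  \sum_(x in best sc P) #|best sc P|%:R^-1 *
    \sum_(i < n) n%:R^-1 * F (semo_update P (flip x i)).
Proof.
have sum_eq (Q0 : population) : \sum_Q (Q0 == Q)%:R * F Q = F Q0.
  by rewrite (bigD1 Q0) //= eqxx mul1r big1 ?addr0 // => Q /negbTE; rewrite eq_sym => ->; rewrite mul0r.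
under eq_bigr do rewrite mulr_suml.
rewrite exchange_big; apply: eq_bigr => x _; under eq_bigr do rewrite -mulrA.
rewrite -mulr_sumr; congr (_ * _); under eq_bigr do rewrite mulr_suml.
rewrite exchange_big; apply: eq_bigr => i _; under eq_bigr do rewrite -mulrA.
by rewrite -mulr_sumr sum_eq.
Qed.

Lemma mean_potential_flip P x : admissible P -> x \in P ->
  \sum_(i < n) n%:R^-1 * (potential (semo_update P (flip x i)))%:R <=
  (potential P)%:R - n%:R^-1 * (improvable P x)%:R :> R.
Proof.
move=> P_adm xP; have n_neq0 : n%:R != 0 :> R by rewrite pnatr_eq0 -lt0n.
rewrite -mulr_sumr -natr_sum lerBrDr -mulrDr -natrD.
rewrite -[X in _ <= X](mulKf n_neq0) -natrM ler_wpM2l ?invr_ge0 ?ler0n // ler_nat.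
apply: leq_sum_strict => [i|/existsP [i lt_i]]; last by exists i.
exact: (admissible_update i P_adm xP).2.
Qed.

Lemma potential_drift P : admissible P -> ~~ front_found P ->
  \sum_Q kernel sc P Q * (potential Q)%:R <= (potential P)%:R - (2 * n)%:R^-1 :> R.
Proof.
move=> P_adm not_found; rewrite sum_kernel_mul; set B := best sc P.
have B_gt0 : (0 < #|B|)%N.
  apply: card_best_gt0; case/admissibleP: P_adm => [[z -> _]|[i [j [le_ijn ->]]]].
    by apply/set0Pn; exists z; rewrite set11.
  by apply/set0Pn; exists (pareto n i); rewrite pareto_in_segment //; lia.
have half := best_improvable m r_gt0 P_adm not_found.
apply: (@le_trans _ _ (\sum_(x in B) #|B|%:R^-1 *
    ((potential P)%:R - n%:R^-1 * (improvable P x)%:R))).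
  apply: ler_sum => x x_B; rewrite ler_wpM2l ?invr_ge0 ?ler0n //.
  exact/mean_potential_flip/(subsetP (best_sub sc P)).
rewrite -mulr_sumr sumrB sumr_const -mulr_sumr -natr_sum -[(potential P)%:R *+ _]mulr_natr.
rewrite mulrBr mulrCA mulVf ?mulr1 ?pnatr_eq0 -?lt0n // lerD2l lerN2.
rewrite sum_pred_card.
have n_gt0' : 0 < n%:R :> R by rewrite ltr0n.
have B_gt0' : 0 < #|B|%:R :> R by rewrite ltr0n.
rewrite natrM invfM mulrC mulrCA ler_pM2l ?invr_gt0 // mulrC ler_pdivlMr //.
by rewrite ler_pdivrMl ?ltr0n // -natrM ler_nat.
Qed.

Lemma init_ge0 P : 0 <= init R P.
Proof. by apply: sumr_ge0 => s _; rewrite mulr_ge0 ?invr_ge0 ?ler0n. Qed.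

Lemma sum_init : \sum_(P : population) init R P = 1.
Proof.
rewrite exchange_big /=; under eq_bigr => s _.
  rewrite -mulr_sumr (bigD1 [set s]) //= eqxx big1 ?addr0 ?mulr1; last by move=> P /negbTE ->.
  over.
by rewrite sumr_const card_tuple card_bool -[_^-1 *+ _]mulr_natr mulVf // pnatr_eq0 expn_eq0.
Qed.

Lemma surv0_ge0 P : 0 <= surv sc n 0 P.
Proof. by rewrite ffunE; case: ifP => _; rewrite ?init_ge0. Qed.

Lemma surv0_found P : front_found P -> surv sc n 0 P = 0.
Proof. by move=> found; rewrite ffunE found. Qed.

Lemma survS t Q : surv sc n t.+1 Q =
  if front_found Q then 0 else \sum_(P : population) surv sc n t P * kernel sc P Q.
Proof. exact: ffunE. Qed.

Lemma surv0_admissible P : ~~ admissible P -> surv sc n 0 P = 0.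
Proof.
move=> P_nadm; rewrite ffunE; case: ifP => // _; apply: big1 => s _.
rewrite (_ : P == [set s] = false) ?mulr0 //.
by apply: contraNF P_nadm => /eqP ->; apply: admissible_single.
Qed.

Lemma potential_admissible P : admissible P -> (potential P <= 2 * n)%N.
Proof.
case/admissibleP => [[z -> _]|[i [j [le_ijn ->]]]]; last by rewrite potential_segment //; lia.
by rewrite potential_single; lia.
Qed.

Lemma initial_mean_potential_le : \sum_(P : population) surv sc n 0 P * (potential P)%:R <= (2 * n)%:R.
Proof.
apply: (@le_trans _ _ (\sum_(P : population) surv sc n 0 P * (2 * n)%:R)).
  apply: ler_sum => P _; have [P_adm|/surv0_admissible ->] := boolP (admissible P).
    by rewrite ler_wpM2l ?surv0_ge0 // ler_nat potential_admissible.
  by rewrite !mul0r.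
rewrite -mulr_suml ler_piMl ?ler0n // -sum_init; apply: ler_sum => P _.
by rewrite ffunE; case: ifP => _; rewrite ?init_ge0.
Qed.

Lemma sum_not_done_prob_le N : \sum_(t < N) not_done_prob sc n t <= (4 * n ^ 2)%:R.
Proof.
have := @additive_drift _ _ (@kernel _ sc n) (@front_found n) (@admissible n)
  (fun P => (potential P)%:R) (2 * n)%:R^-1 (fun t => surv sc n t)
  kernel_ge0 kernel_admissible (fun P => ler0n _ _) potential_drift surv0_ge0
  surv0_found surv0_admissible survS N.
move/le_trans/(_ initial_mean_potential_le).
rewrite ler_pdivrMl ?ltr0n ?muln_gt0 // -natrM.
by rewrite (_ : 4 * n ^ 2 = (2 * n) * (2 * n))%N // mulnACA.
Qed.

End SEMOOnLOTZ.

Local Open Scope ring_scope.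

Theorem theorem7 (R : realFieldType) (r : R) :
  1 <= r ->
  forall m : measure,
  exists C : R,
    forall n : nat, (0 < n)%N ->
    forall N : nat,
      \sum_(t < N) not_done_prob (score_of r m) n t <= C * (n ^ 2)%N%:R.
Proof.
move=> r_ge1 m; exists 4%:R => n n_gt0 N.
rewrite -natrM; apply: sum_not_done_prob_le n_gt0 N.
exact: lt_le_trans ltr01 r_ge1.
Qed.
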